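(* Let $d>k\ge 0$ be integers. Then $f(k,d)\le \frac{k+2}{d+3}$.
   Context: For a graph $G=(V,E)$ and an integer $k\ge 0$, a $k$-independent set is a set $S\subseteq V$ such that the induced subgraph $G[S]$ has maximum degree at most $k$; $\alpha_k(G)$ denotes the maximum cardinality of a $k$-independent set of $G$. $n(G)$ is the number of vertices and $d(G)=2|E(G)|/n(G)$ the average degree. For integers $d,k\ge 0$, $f(k,d)=\inf\left\{\frac{\alpha_k(G)}{n(G)} : G \text{ a finite simple graph with at least one vertex and } d(G)\le d\right\}$. *)

From HB Require Import structures.
From mathcomp Require Import all_boot all_order all_algebra.
Set Implicit Arguments. Unset Strict Implicit. Unset Printing Implicit Defensive.
Import Order.TTheory GRing.Theory Num.Theory.

Section Graphs.
Variable T : finType.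

Definition simple_graph (e : rel T) : Prop := irreflexive e /\ symmetric e.

Definition edges (e : rel T) : {set {set T}} :=
  [set A : {set T} | [exists x, exists y, e x y && (A == [set x; y])]].

Definition avg_degree (e : rel T) : rat :=
  ((2 * #|edges e|)%:R / (#|T|)%:R)%R.

Definition k_independent (e : rel T) (k : nat) (S : {set T}) : bool :=
  [forall x in S, #|[set y in S | e x y]| <= k].

Definition alpha_k (e : rel T) (k : nat) : nat :=
  \max_(S : {set T} | k_independent e k S) #|S|.

End Graphs.

(* The bound f(k,d) <= (k+2)/(d+3) is witnessed by a single graph: the
   complement of the cycle C_{d+3}, i.e. the vertices 'I_(d+3) where x and y
   are adjacent unless they are equal or cyclically consecutive.

   - A simple graph of maximum degree at most D has average degree at most D
     (handshake counting, [avg_degree_le_maxdeg]).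
   - The complement of C_n is (n-3)-regular ([cocycle_deg]), so for n = d+3
     its average degree is d.
   - If S is k-independent and x is in S, then |S| <= k + |S /\ non-nbhd(x)|
     ([k_independent_card_le]).  In the cycle complement the non-neighbourhood
     of x is {x, x+1, x-1}, so a k-independent set with k+3 elements must be
     closed under the cyclic successor, hence be the whole vertex set; for
     k < n-3 this is impossible, so alpha_k <= k+2 ([alpha_k_cocycle]).
   The ratio alpha_k/n is then at most (k+2)/(d+3), with no need for the
   slack eps of the statement. *)
From HB Require Import structures.
From mathcomp Require Import all_boot all_order all_algebra.
From mathcomp Require Import zify.
Import Order.TTheory GRing.Theory Num.Theory.

Section GeneralGraphs.
Variable T : finType.

(* Handshake inequality: counting vertex-edge incidences, twice the number of
   edges is at most the number of vertices times the maximum degree. *)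
Lemma edges_card_le_maxdeg (e : rel T) (D : nat) :
  simple_graph e -> (forall x, #|[set y | e x y]| <= D) ->
  2 * #|edges e| <= #|T| * D.
Proof.
move=> [irr sym] degD.
have edge_card2 A : A \in edges e -> #|A| = 2.
  rewrite inE => /existsP [a /existsP [b /andP [eab /eqP ->]]].
  by rewrite cards2; case: eqP => // eq_ab; rewrite eq_ab irr in eab.
have -> : 2 * #|edges e| = \sum_(A in edges e) \sum_(x : T) (x \in A : nat).
  rewrite mulnC -sum_nat_const; apply: eq_bigr => A /edge_card2 <-.
  by rewrite -sum1_card big_mkcond.
rewrite exchange_big /= -[#|T|]/#|predT| -sum_nat_const.
apply: leq_sum => x _; rewrite -big_mkcondr sum1_card.
(* Each edge at x is {x, y} for a neighbour y of x. *)
apply: leq_trans (degD x); apply: leq_trans (leq_imset_card (fun y => [set x; y]) _).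
apply/subset_leq_card/subsetP => A; rewrite unfold_in /= inE => /andP [].
move=> /existsP [a /existsP [b /andP [eab /eqP ->]]].
rewrite !inE => /orP [] /eqP xE; rewrite -xE in eab *.
- by apply: imset_f; rewrite inE.
- by rewrite setUC; apply: imset_f; rewrite inE sym.
Qed.

Lemma avg_degree_le_maxdeg (e : rel T) (D : nat) :
  simple_graph e -> (forall x, #|[set y | e x y]| <= D) ->
  (avg_degree e <= D%:R)%R.
Proof.
move=> simple_e degD; rewrite /avg_degree.
have [T0 | T_gt0] := posnP #|T|; first by rewrite T0 invr0 mulr0.
rewrite ler_pdivrMr ?ltr0n // -natrM ler_nat [(D * _)%N]mulnC.
exact: edges_card_le_maxdeg.
Qed.

(* In a k-independent set S, a vertex x of S sees at most k vertices of S;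
   all others lie in its closed non-neighbourhood. *)
Lemma k_independent_card_le (e : rel T) (k : nat) (S : {set T}) (x : T) :
  k_independent e k S -> x \in S ->
  #|S| <= k + #|S :&: [set y | ~~ e x y]|.
Proof.
move=> /forallP /(_ x) indS xS; move: indS; rewrite xS /= => degS.
rewrite -(cardsID [set y | e x y] S) leq_add //.
- by apply: leq_trans degS; apply/subset_leq_card/subsetP => y; rewrite !inE.
- by apply/eq_leq/eq_card => y; rewrite !inE andbC.
Qed.

End GeneralGraphs.

Section CyclicSuccessor.
Variable n : nat.

Lemma iter_ordS (x : 'I_n) (m : nat) : val (iter m (@ordS n) x) = (x + m) %% n.
Proof.
elim: m => [|m IH]; first by rewrite addn0 modn_small.
by rewrite iterS /= IH -addn1 modnDml addn1 addnS.
Qed.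

Lemma ordS_closed_setT (S : {set 'I_n}) (x0 : 'I_n) :
  x0 \in S -> {in S, forall y, ordS y \in S} -> S = setT.
Proof.
move=> x0S closedS; apply/setP => y; rewrite inE.
have -> : y = iter (y + n - x0) (@ordS n) x0.
  apply/val_inj; rewrite iter_ordS.
  have -> : x0 + (y + n - x0) = y + n by have := ltn_ord x0; lia.
  by rewrite modnDr modn_small.
by elim: (y + n - x0) => [|m IH] //=; apply: closedS.
Qed.

Lemma val_ordS (x : 'I_n) : val (ordS x) = if x.+1 == n then 0 else x.+1.
Proof.
rewrite /=; case: eqP => [-> | ]; first by rewrite modnn.
by have := ltn_ord x => lt_xn ne_xn; rewrite modn_small //; lia.
Qed.

Hypothesis n_gt2 : 2 < n.

Lemma ordS_neq (x : 'I_n) : (x == ordS x) = false.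
Proof.
by apply/negbTE/eqP => /(congr1 val); rewrite val_ordS; case: eqP => /=; lia.
Qed.

Lemma ordS2_neq (x : 'I_n) : (x == ordS (ordS x)) = false.
Proof.
apply/negbTE/eqP => /(congr1 val); rewrite !val_ordS.
by have := ltn_ord x; do 2 case: eqP => /=; lia.
Qed.

Definition cocycle : rel 'I_n :=
  fun x y => [&& x != y, y != ordS x & x != ordS y].

Lemma cocycle_simple : simple_graph cocycle.
Proof.
split => [x | x y]; first by rewrite /cocycle eqxx.
by rewrite /cocycle [y == x]eq_sym; do 2 case: (_ == ordS _); rewrite ?andbF.
Qed.

Lemma cocycle_non_nbhd (x : 'I_n) :
  [set y | ~~ cocycle x y] = [set x; ordS x; ord_pred x].
Proof.
apply/setP => y; rewrite !inE /cocycle !negb_and !negbK [x == y]eq_sym -orbA.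
by rewrite -[x in x == ordS y]ord_predK (inj_eq (@ordS_inj n)) [ord_pred x == y]eq_sym.
Qed.

Lemma card_cocycle_non_nbhd (x : 'I_n) : #|[set x; ordS x; ord_pred x]| = 3.
Proof.
rewrite -setUA cardsU1 cards2 !inE -!(inj_eq (@ordS_inj n) _ (ord_pred x)).
by rewrite ord_predK !(eq_sym _ x) ordS_neq ordS2_neq.
Qed.

Lemma cocycle_deg (x : 'I_n) : #|[set y | cocycle x y]| = n - 3.
Proof.
have := cardsC [set y | cocycle x y]; rewrite card_ord.
have -> : ~: [set y | cocycle x y] = [set y | ~~ cocycle x y].
  by apply/setP => y; rewrite !inE.
by rewrite cocycle_non_nbhd card_cocycle_non_nbhd; lia.
Qed.

(* A k-independent set with k+3 vertices would have to contain the whole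
   non-neighbourhood of each of its vertices, hence be successor-closed and
   thus the whole cycle, which is too large when k + 3 < n. *)
Lemma cocycle_k_independent_card (k : nat) (S : {set 'I_n}) :
  k + 3 < n -> k_independent cocycle k S -> #|S| <= k + 2.
Proof.
move=> k_lt indS; rewrite leqNgt; apply/negP => large.
have bound x : x \in S -> #|S| <= k + #|S :&: [set x; ordS x; ord_pred x]|.
  by rewrite -cocycle_non_nbhd; apply: k_independent_card_le.
have closedS : {in S, forall y, ordS y \in S}.
  move=> x xS; have full : #|[set x; ordS x; ord_pred x]| <= #|S :&: [set x; ordS x; ord_pred x]|.
    by rewrite card_cocycle_non_nbhd; have := bound x xS; lia.
  have : [set x; ordS x; ord_pred x] \subset S.
    by apply/setIidPr/eqP; rewrite eqEcard subsetIr full.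
  by move/subsetP; apply; rewrite !inE eqxx orbT.
have [x0 x0S] : exists x0, x0 \in S by apply/set0Pn; rewrite -card_gt0; lia.
have := bound x0 x0S; rewrite (ordS_closed_setT _ _ x0S closedS) setTI.
by rewrite card_cocycle_non_nbhd cardsT card_ord; lia.
Qed.

Lemma alpha_k_cocycle (k : nat) : k + 3 < n -> alpha_k cocycle k <= k + 2.
Proof.
by move=> k_lt; apply/bigmax_leqP => S; apply: cocycle_k_independent_card.
Qed.

End CyclicSuccessor.

Theorem mainTheorem10 (k d : nat) : (k < d)%N ->
  forall eps : rat, (0 < eps)%R ->
  exists (n : nat) (e : rel 'I_n),
    [/\ (0 < n)%N, simple_graph e,
        (avg_degree e <= d%:R)%R &
        ((alpha_k e k)%:R / n%:R <= (k + 2)%:R / (d + 3)%:R + eps)%R].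
Proof.
move=> k_lt_d eps eps_gt0.
have n_gt2 : 2 < d + 3 by lia.
exists (d + 3), (cocycle (d + 3)); split.
- by rewrite addn3.
- exact: cocycle_simple.
- apply: avg_degree_le_maxdeg; first exact: cocycle_simple.
  by move=> x; rewrite cocycle_deg // addnK.
- apply: ler_wpDr; first exact: ltW.
  rewrite ler_wpM2r ?invr_ge0 ?ler0n // ler_nat.
  by apply: alpha_k_cocycle => //; lia.
Qed.
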